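(* Let $n\ge1$, let $G^\star=([n],E^\star)$ be a directed graph (directed cycles allowed), and let $S_1=\operatorname{argmin}_{\mathcal S}|E^{(1)}|$, $S_2=\operatorname{argmin}_{S_1}|E^{(2)}|$, $S_3=\operatorname{argmin}_{(\mathcal P,\pi)\in S_2}|E^{(3)}_{(\mathcal P,\pi)}|$. Then (i) the partially ordered partition associated with $G^\star$ belongs to $S_3$, and (ii) for every $(\mathcal P,\pi)\in S_3$, $E^{(3)}_{(\mathcal P,\pi)}$ equals the set of unshielded perfect non-conductors in $G^\star$.
   Context: $[n]=\{1,\dots,n\}$. The observed distribution is Markov and faithful to $G^\star$; for distinct $a,b$ and $Z\subseteq[n]\setminus\{a,b\}$, $a\perp\!\!\!\perp b\mid Z$ means $a$ and $b$ are $d$-separated given $Z$ in $G^\star$, and $a\not\perp\!\!\!\perp b\mid Z$ is its negation. In a directed graph, $a$ is an ancestor of $b$ (and $b$ a descendant of $a$) if $a=b$ or there is a directed path from $a$ to $b$. Distinct $a,b$ are $p$-adjacent in a directed graph $G$ if there is an edge between them, or they have a common child which is an ancestor of $a$ or of $b$. A triple $(a,b,c)$ such that $a,c$ are not $p$-adjacent while $a,b$ and $c,b$ are $p$-adjacent is an unshielded conductor if $b$ is an ancestor of $a$ or of $c$, and an unshielded non-conductor otherwise; an unshielded non-conductor $(a,b,c)$ is perfect if $b$ is a descendant of a common child of $a$ and $c$, and imperfect otherwise. $\mathcal S$ is the set of pairs $(\mathcal P,\pi)$ with $\mathcal P$ a partition of $[n]$ and $\pi$ a partial order on $\mathcal P$;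 $C_1\le_\pi C_2$ iff $(C_1,C_2)\in\pi$; $C_{i,\mathcal P}$ is the block containing $i$; $C\le_\pi\max\{C_1,\dots,C_t\}$ means $C\le_\pi C_i$ for some $i$. The strongly connected components of a directed graph $G$ are the classes of $i\sim j$ iff $i=j$ or there are directed paths $i\to j$ and $j\to i$; on them $C_1\le_G C_2$ iff $C_1=C_2$ or there is a directed path from a vertex of $C_1$ to a vertex of $C_2$. The partially ordered partition associated with $G$ is (its set of strongly connected components, $\le_G$). For $(\mathcal P,\pi)\in\mathcal S$: $E^{(1)}_{(\mathcal P,\pi)}=\{(a,b): a\ne b,\ a\not\perp\!\!\!\perp b\mid\bigcup\{C\in\mathcal P: C\le_\pi\max\{C_{a,\mathcal P},C_{b,\mathcal P}\}\}\setminus\{a,b\}\}$; $E^{(2)}_{(\mathcal P,\pi)}$ is the set of $(a,b,c)$ distinct with $(a,b),(c,b)\in E^{(1)}$, $(a,c)\notin E^{(1)}$, $C_{b,\mathcal P}\le_\pi\max\{C_{a,\mathcal P},C_{c,\mathcal P}\}$; $E^{(3)}_{(\mathcal P,\pi)}$ is the set of $(a,b,c)$ distinct with $(a,b),(c,b)\in E^{(1)}$, $(a,c)\notin E^{(1)}$, and $a\not\perp\!\!\!\perp c\mid\bigcup\{C\in\mathcal P: C\le_\pi\max\{C_{a,\mathcal P},C_{b,\mathcal P},C_{c,\mathcal P}\}\}\setminus\{a,c\}$ (all $E$-sets indexed by $(\mathcal P,\pi)$). *)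

From mathcomp Require Import all_boot.
From Stdlib Require Import ClassicalEpsilon.
Set Implicit Arguments. Unset Strict Implicit. Unset Printing Implicit Defensive.

Definition pb (P : Prop) : bool := if excluded_middle_informative P then true else false.

Section Defs.
Variable T : finType.
Implicit Types (E : rel T) (Z : {set T}) (a b c : T).

Definition ancestor E a b : bool := connect E a b.

(* A path between a and b: distinct vertices vs = [v_0 = a; ...; v_k = b] and
   edges given by orientations os (size k): if os_i, the edge is v_i -> v_{i+1},
   otherwise v_{i+1} -> v_i. *)
Definition d_connected E Z a b : Prop :=
  exists (vs : seq T) (os : seq bool),
    [/\ size vs = (size os).+1, nth a vs 0 = a, nth a vs (size os) = b & uniq vs] /\
    (
        (forall i, i < size os ->
           if nth false os i then E (nth a vs i) (nth a vs i.+1)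
           else E (nth a vs i.+1) (nth a vs i)) /\
        (forall i, 0 < i < size os ->
           if nth false os i.-1 && ~~ nth false os i
           then [exists z in Z, ancestor E (nth a vs i) z]
           else nth a vs i \notin Z)).

Definition d_separated E Z a b : Prop := ~ d_connected E Z a b.

(* candidate partially ordered partitions: s.1 = partition P, s.2 = order pi *)
Definition ppo := ({set {set T}} * {set ({set T} * {set T})})%type.

Definition is_ppo (s : ppo) : Prop :=
  [/\ partition s.1 [set: T],
      (forall C1 C2, (C1, C2) \in s.2 -> (C1 \in s.1) && (C2 \in s.1)),
      (forall C, C \in s.1 -> (C, C) \in s.2),
      (forall C1 C2, (C1, C2) \in s.2 -> (C2, C1) \in s.2 -> C1 = C2) &
      (forall C1 C2 C3, (C1, C2) \in s.2 -> (C2, C3) \in s.2 -> (C1, C3) \in s.2)].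

Definition below (s : ppo) (xs : seq T) : {set T} :=
  \bigcup_(C in s.1 | has (fun x => (C, pblock s.1 x) \in s.2) xs) C.

Definition E1 E (s : ppo) : {set T * T} :=
  [set p : T * T | (p.1 != p.2) &&
     pb ( ~ d_separated E (below s [:: p.1; p.2] :\: [set p.1; p.2]) p.1 p.2 )].

Definition E2 E (s : ppo) : {set T * T * T} :=
  [set t : T * T * T | let: (a, b, c) := t in
     [&& a != b, b != c, a != c, (a, b) \in E1 E s, (c, b) \in E1 E s,
         (a, c) \notin E1 E s &
         ((pblock s.1 b, pblock s.1 a) \in s.2) || ((pblock s.1 b, pblock s.1 c) \in s.2)]].

Definition E3 E (s : ppo) : {set T * T * T} :=
  [set t : T * T * T | let: (a, b, c) := t in
     [&& a != b, b != c, a != c, (a, b) \in E1 E s, (c, b) \in E1 E s,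
         (a, c) \notin E1 E s &
         pb ( ~ d_separated E (below s [:: a; b; c] :\: [set a; c]) a c )]].

Definition S1 E (s : ppo) : Prop :=
  is_ppo s /\ forall t, is_ppo t -> #|E1 E s| <= #|E1 E t|.
Definition S2 E (s : ppo) : Prop :=
  S1 E s /\ forall t, S1 E t -> #|E2 E s| <= #|E2 E t|.
Definition S3 E (s : ppo) : Prop :=
  S2 E s /\ forall t, S2 E t -> #|E3 E s| <= #|E3 E t|.

Definition scc E a : {set T} := [set x | ancestor E a x && ancestor E x a].
Definition graph_ppo E : ppo :=
  ([set scc E x | x : T],
   [set C : {set T} * {set T} |
      [&& C.1 \in [set scc E x | x : T], C.2 \in [set scc E x | x : T] &
          [exists x in C.1, exists y in C.2, ancestor E x y]]]).

Definition p_adjacent E a b : bool :=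
  (a != b) && [|| E a b, E b a |
     [exists d, [&& E a d, E b d & ancestor E d a || ancestor E d b]]].

Definition unshielded_perfect_nonconductors E : {set T * T * T} :=
  [set t : T * T * T | let: (a, b, c) := t in
     [&& a != c, ~~ p_adjacent E a c, p_adjacent E a b, p_adjacent E c b,
         ~~ (ancestor E b a || ancestor E b c) &
         [exists d, [&& E a d, E c d & ancestor E d b]]]].

End Defs.

From mathcomp Require Import all_boot.
From Stdlib Require Import ClassicalEpsilon.
Set Implicit Arguments. Unset Strict Implicit. Unset Printing Implicit Defensive.

(* A d-connecting path is handled as a walk, a list of oriented steps; any walk
   that is active at each interior vertex shortens to such a path, since cutting
   out a closed subwalk keeps the cut vertex active.  For the partition of the
   graph into strongly connected components every conditioning set is
   ancestral, and a path that is d-connecting given an ancestral set minus its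
   endpoints can only have colliders inside, so it is an edge or a collider
   a -> d <- c.  This identifies E1, E2 and E3 of the graph with the p-adjacent
   pairs, the unshielded conductors and the unshielded perfect non-conductors.
   For an arbitrary candidate, p-adjacent pairs and perfect non-conductors are
   always d-connected given the relevant sets, and once E1 is minimal an
   unshielded conductor must satisfy the order condition of E2, otherwise its
   endpoints would be d-connected.  Hence the graph attains the three minima,
   and a minimizer's E3, containing the perfect non-conductors, equals them. *)

Section Walks.
Variables (T : finType) (E : rel T) (Z : {set T}).
Implicit Types (x y u v w : T) (o r : bool) (oin : option bool) (p q : seq (bool * T)).

Definition ancZ v := [exists z in Z, ancestor E v z].
Definition oedge o x y := if o then E x y else E y x.
Definition active l r v := if l && ~~ r then ancZ v else v \notin Z.
Definition active_after oin r v := if oin is Some l then active l r v else true.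

(* A walk from [x] is a list of steps [(o, y)], each moving to [y] along the
   edge [x -> y] if [o] and [y -> x] otherwise; [oin] is the orientation of the
   step entering [x], [None] at the start of the walk. *)
Fixpoint dcwalk oin x p :=
  if p is (o, y) :: p' then [&& active_after oin o x, oedge o x y & dcwalk (Some o) y p']
  else true.

Definition wend x p := last x (unzip2 p).
Definition wdir oin p := last oin (map Some (unzip1 p)).

Lemma wend_cat x p q : wend x (p ++ q) = wend (wend x p) q.
Proof. by rewrite /wend /unzip2 map_cat last_cat. Qed.

Lemma wend_rcons x p o y : wend x (rcons p (o, y)) = y.
Proof. by rewrite /wend /unzip2 map_rcons last_rcons. Qed.

Lemma wdir_rcons oin p o y : wdir oin (rcons p (o, y)) = Some o.
Proof. by rewrite /wdir /unzip1 !map_rcons last_rcons. Qed.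

Lemma wdir_Some o p : exists l, wdir (Some o) p = Some l.
Proof. by elim: p o => [|[l y] p IH] o /=; [exists o | apply: IH]. Qed.

Lemma dcwalk_cat oin x p q :
  dcwalk oin x (p ++ q) = dcwalk oin x p && dcwalk (wdir oin p) (wend x p) q.
Proof. by elim: p oin x => [|[o y] p IH] oin x //=; rewrite IH !andbA. Qed.

Lemma ancZ_trans x y : ancestor E x y -> ancZ y -> ancZ x.
Proof.
move=> xy /existsP[z /andP[zZ yz]]; apply/existsP; exists z.
by rewrite zZ; apply: connect_trans xy yz.
Qed.

Lemma notin_ancZ v : ~~ ancZ v -> v \notin Z.
Proof. by apply: contra => vZ; apply/existsP; exists v; rewrite vZ; apply: connect0. Qed.

Lemma active_in_Z l r v : active l r v -> v \in Z -> l && ~~ r.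
Proof. by rewrite /active; case: ifP => // _ /negPf->. Qed.

Lemma active_after_notin oin o v : oin != Some true -> v \notin Z -> active_after oin o v.
Proof. by case: oin => [[]|] //= _ vZ; rewrite /active /= vZ. Qed.

Lemma active_after_ancZ oin o v : ancZ v -> v \notin Z -> active_after oin o v.
Proof. by case: oin => [l|] //= vA vZ; rewrite /active; case: ifP. Qed.

Lemma dcwalk_enter oin x p :
  (forall o, active_after oin o x) -> dcwalk None x p -> dcwalk oin x p.
Proof. by case: p => [|[o y] p] //= hx ->; rewrite hx. Qed.

Lemma dcwalk_forward y p : dcwalk (Some true) y p ->
  ancZ y \/ ancestor E y (wend y p) /\ wdir (Some true) p = Some true.
Proof.
elim: p y => [|[[] w] p IH] y /=; first by right; split=> //; apply: connect0.
  case/and3P=> _ yw /IH [wZ|[wp dp]]; first by left; apply: ancZ_trans (connect1 yw) wZ.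
  by right; split=> //; apply: connect_trans (connect1 yw) wp.
by case/andP=> yZ _; left.
Qed.

(* A collider created at [x] is an ancestor of [Z]: either [x] already was a
   collider, or the loop leaves [x] forwards and then meets a collider or
   returns to [x] as one. *)
Lemma dcwalk_drop_loop oin x l q :
  dcwalk oin x (l ++ q) -> wend x l = x -> dcwalk oin x q.
Proof.
rewrite dcwalk_cat => /andP[wl wq] lx; rewrite lx in wq.
case: q wq => [|[o2 y] q] //= /and3P[+ -> ->]; rewrite !andbT.
case: l wl lx => [_ _ //|[o1 w] l /= /and3P[j1 e1 wl] _].
case: oin j1 => [o0|] //= j1; have [ol dl] := wdir_Some o1 l.
rewrite [wdir _ _]dl /active in j1 *; case: o0 o2 j1 => [] [] //= j1 j2.
  by move: j2; rewrite /active andbF.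
case: o1 e1 wl j1 dl => //= e1 /dcwalk_forward [wZ _ _|[_ -> _ [eol]]].
  exact: ancZ_trans (connect1 e1) wZ.
by rewrite -eol in j2.
Qed.

Lemma split_at_vertex x p : x \in unzip2 p -> exists l o q, p = rcons l (o, x) ++ q.
Proof.
case/mapP=> -[o y] /splitPr [l q] /= ->.
by exists l, o, q; rewrite cat_rcons.
Qed.

Lemma dcwalk_uniq oin x p : dcwalk oin x p ->
  exists q, [/\ dcwalk oin x q, wend x q = wend x p & uniq (x :: unzip2 q)].
Proof.
elim: p oin x => [|[o y] p IH] oin x /=; first by exists [::].
case/and3P=> jx exy /IH [q [wq qp uq]].
have wr : dcwalk oin x ((o, y) :: q) by rewrite /= jx exy.
have [xr|xr] := boolP (x \in unzip2 ((o, y) :: q)).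
  2: by exists ((o, y) :: q); split; rewrite //= xr.
have [l [o' [q' er]]] := split_at_vertex xr.
have ur : uniq (unzip2 ((o, y) :: q)) by [].
rewrite er in wr ur; exists q'.
have lx : wend x (rcons l (o', x)) = x by rewrite wend_rcons.
split; first exact: dcwalk_drop_loop wr lx.
  by rewrite -{1}lx -wend_cat -er.
move: ur; rewrite /unzip2 map_cat cat_uniq map_rcons => /and3P[_ /hasPn xq ->].
by rewrite andbT; apply/negP => /xq; rewrite mem_rcons mem_head.
Qed.

Lemma dcwalk_nthP d oin x p : dcwalk oin x p <-> forall i, i < size p ->
  active_after (nth None (oin :: map Some (unzip1 p)) i) (nth false (unzip1 p) i)
    (nth d (x :: unzip2 p) i)
  && oedge (nth false (unzip1 p) i) (nth d (x :: unzip2 p) i) (nth d (x :: unzip2 p) i.+1).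
Proof.
elim: p oin x => [|[o y] p IH] oin x /=; first by [].
rewrite andbA; split.
  by case/andP=> hx /IH hp [|i] //= /hp.
by move=> h; rewrite (h 0 isT); apply/IH => i /(h i.+1).
Qed.

Lemma d_connectedP a c : d_connected E Z a c <->
  exists p, [/\ dcwalk None a p, wend a p = c & uniq (a :: unzip2 p)].
Proof.
split.
  case=> -[|v vs] [os [[//= [sz] <- vk uvs] [hE hA]]].
  have [e1 e2] : unzip1 (zip os vs) = os /\ unzip2 (zip os vs) = vs.
    by rewrite unzip1_zip ?unzip2_zip ?sz.
  exists (zip os vs); rewrite e2; split=> //.
    apply/(dcwalk_nthP v) => i; rewrite size_zip sz minnn e1 e2 => lti.
    rewrite /oedge hE // andbT; case: i lti => //= i lti.
    by rewrite (nth_map false) 1?ltnW //; apply: (hA i.+1 lti).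
  by rewrite /wend e2 (last_nth v) sz.
case=> p [wp ep up]; exists (a :: unzip2 p), (unzip1 p).
have sz : size (unzip2 p) = size (unzip1 p) by rewrite !size_map.
split; first split=> //; first by rewrite /= sz.
  by rewrite -sz -ep /wend (last_nth a).
move/(dcwalk_nthP a): wp; rewrite -(size_map fst) => wp.
split=> [i lti|[|i] //= lti]; first by case/andP: (wp i lti).
by case/andP: (wp i.+1 lti); rewrite /= (nth_map false) 1?ltnW.
Qed.

Lemma d_connected_dcwalk a p : dcwalk None a p -> d_connected E Z a (wend a p).
Proof. by case/dcwalk_uniq=> q [wq <- uq]; apply/d_connectedP; exists q. Qed.

Definition ancestral (A : {set T}) := forall u v, ancestor E u v -> v \in A -> u \in A.

Lemma dcwalk_sub_ancestral (A : {set T}) oin x p : ancestral A -> Z \subset A ->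
  dcwalk oin x p -> (oin != Some true -> x \in A) -> wend x p \in A ->
  {subset x :: unzip2 p <= A}.
Proof.
move=> A_anc /subsetP ZA; have ancZ_A v : ancZ v -> v \in A.
  by case/existsP=> z /andP[/ZA zA vz]; apply: A_anc vz zA.
elim: p oin x => [|[o y] p IH] oin x /=; first by move=> _ _ xA v /[!inE] /eqP->.
case/and3P=> jx exy wp xA; rewrite -[wend _ _]/(wend y p) => endA.
have {}xA : x \in A.
  case: o exy jx wp => /= exy jx wp.
    apply: (A_anc _ _ (connect1 exy)).
    by have [/ancZ_A //|[yend _]] := dcwalk_forward wp; apply: (A_anc _ _ yend endA).
  by case: oin xA jx => [[]|] xA //= jx; [apply: ancZ_A | apply: xA].
have yA : Some o != Some true -> y \in A.
  by case: o exy {jx wp} => //= eyx _; apply: (A_anc _ _ (connect1 eyx) xA).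
by move=> v /[!inE] /predU1P[->|/(IH _ _ wp yA endA)].
Qed.

(* When [Z] is all of an ancestral set [A] but the endpoints, every interior
   vertex of a d-connecting path lies in [Z] and must therefore be a collider,
   so the path has at most one interior vertex. *)
Lemma d_connected_ancestral (A : {set T}) a c : ancestral A ->
  a \in A -> c \in A -> a != c -> Z = A :\: [set a; c] -> d_connected E Z a c ->
  [\/ E a c, E c a | exists2 d, d \in A & E a d && E c d].
Proof.
move=> A_anc aA cA ac eZ /d_connectedP[p [wp ep up]].
have ZA : Z \subset A by rewrite eZ subsetDl.
have pA : {subset a :: unzip2 p <= A}.
  by apply: (dcwalk_sub_ancestral A_anc ZA wp) => //; rewrite ep.
have inZ v : v \in A -> v != a -> v != c -> v \in Z.
  by rewrite eZ !inE => -> /negPf-> /negPf->.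
case: p wp ep up pA => [|[o1 y1] [|[o2 y2] p]] /=.
- by move=> _ eac; case/eqP: ac.
- by case: o1 => /= /andP[eac _] <- _ _; [constructor 1 | constructor 2].
move=> /and4P[e1 j1 e2 wp]; rewrite /wend /= => ep /and4P[ar y1r y2r _] pA.
have y1Z : y1 \in Z.
  apply: inZ; first by apply: pA; rewrite !inE eqxx orbT.
    by apply: contraNneq ar => <-; rewrite mem_head.
  by apply: contraNneq y1r => ->; rewrite -ep mem_last.
have /andP[o1T o2F] := active_in_Z j1 y1Z.
case: p => [|[o3 y3] p] /= in wp ep ar y1r y2r pA *.
  constructor 3; exists y1; first by apply: pA; rewrite !inE eqxx orbT.
  by move: e1 e2; rewrite /oedge o1T (negPf o2F) -ep => -> ->.
case/andP: wp => j2 _.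
have y2Z : y2 \in Z.
  apply: inZ; first by apply: pA; rewrite !inE eqxx !orbT.
    by apply: contraNneq ar => <-; rewrite !inE eqxx orbT.
  by apply: contraNneq y2r => ->; rewrite -ep mem_last.
by have /andP[o2T _] := active_in_Z j2 y2Z; rewrite o2T in o2F.
Qed.

Lemma dcwalk_descend u v : ~~ ancZ u -> ancestor E u v ->
  exists2 p, dcwalk (Some true) u p & wend u p = v.
Proof.
move=> nu /connectP[q pq ->]; elim: q u nu pq => [|w q IH] u nu /=; first by exists [::].
case/andP=> uw /(IH w (contra (ancZ_trans (connect1 uw)) nu)) [p wp ep].
by exists ((true, w) :: p); rewrite //= /active /= notin_ancZ // uw.
Qed.

Lemma dcwalk_ascend u v : ~~ ancZ u -> ancestor E u v ->
  exists p, [/\ dcwalk None v p, wend v p = u & wdir None p != Some true].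
Proof.
move=> nu /connectP[q pq ->]; elim: q u nu pq => [|w q IH] u nu /=; first by exists [::].
case/andP=> uw; have nw := contra (ancZ_trans (connect1 uw)) nu.
case/(IH w nw)=> p [wp ep dp]; exists (rcons p (false, u)).
rewrite wend_rcons wdir_rcons; split=> //.
by rewrite -cats1 dcwalk_cat wp ep /= active_after_notin ?notin_ancZ // /oedge uw.
Qed.

Lemma dcwalk_p_adjacent x y : p_adjacent E x y -> exists2 p, dcwalk None x p & wend x p = y.
Proof.
case/andP=> _ /or3P[xy|yx|/existsP[d /and3P[xd yd dxy]]].
- by exists [:: (true, y)]; rewrite //= /oedge xy.
- by exists [:: (false, y)]; rewrite //= /oedge yx.
have [dZ|ndZ] := boolP (ancZ d).
  by exists [:: (true, d); (false, y)]; rewrite //= /oedge /active /= xd yd dZ.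
case/orP: dxy => [dx|dy].
  have [p [wp ep dp]] := dcwalk_ascend ndZ dx.
  exists (rcons p (false, y)); last exact: wend_rcons.
  by rewrite -cats1 dcwalk_cat wp ep /= active_after_notin ?notin_ancZ // /oedge yd.
have [p wp ep] := dcwalk_descend ndZ dy.
by exists ((true, d) :: p); rewrite //= /oedge xd.
Qed.

Lemma d_connected_p_adjacent x y : p_adjacent E x y -> d_connected E Z x y.
Proof. by case/dcwalk_p_adjacent=> p /d_connected_dcwalk + <-. Qed.

Lemma d_connected_common_child a c d : E a d -> E c d -> ancZ d -> d_connected E Z a c.
Proof.
move=> ad cd dZ; apply: (d_connected_dcwalk (p := [:: (true, d); (false, c)])).
by rewrite /= /oedge /active /= ad cd dZ.
Qed.

(* If [b] is not an ancestor of [Z], the walk reaches it backwards along the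
   directed path from [b] to [a], so [b] is not a collider. *)
Lemma d_connected_via_ancestor a b c :
  p_adjacent E a b -> p_adjacent E b c -> ancestor E b a -> b \notin Z ->
  d_connected E Z a c.
Proof.
move=> ab bc ba bZ; have [q wq <-] := dcwalk_p_adjacent bc.
have [p [wp ep hb]] : exists p, [/\ dcwalk None a p, wend a p = b &
    forall o, active_after (wdir None p) o b].
  have [bA|nbA] := boolP (ancZ b).
    have [p wp ep] := dcwalk_p_adjacent ab.
    by exists p; split=> // o; apply: active_after_ancZ.
  have [p [wp ep dp]] := dcwalk_ascend nbA ba.
  by exists p; split=> // o; apply: active_after_notin.
rewrite -ep -wend_cat; apply: d_connected_dcwalk.
by rewrite dcwalk_cat wp ep dcwalk_enter.
Qed.

End Walks.

Lemma pbP (P : Prop) : reflect P (pb P).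
Proof. by rewrite /pb; case: excluded_middle_informative => h; constructor. Qed.

Lemma not_d_separatedP (T : finType) (E : rel T) Z a b :
  ~ d_separated E Z a b <-> d_connected E Z a b.
Proof.
split=> [nsep|dcon]; last by apply.
by case: (excluded_middle_informative (d_connected E Z a b)) => // /nsep.
Qed.

Section PartiallyOrderedPartitions.
Variable T : finType.
Implicit Types (s : ppo T) (x y : T) (xs : seq T).

Lemma mem_below s x xs : is_ppo s ->
  (x \in below s xs) = has (fun y => (pblock s.1 x, pblock s.1 y) \in s.2) xs.
Proof.
case=> /and3P[/eqP cov triv _] _ refl _ _.
have xP : pblock s.1 x \in s.1 by rewrite pblock_mem // cov inE.
apply/bigcupP/idP => [[C /andP[Cs hs] xC]|hs].
  by rewrite (def_pblock triv Cs xC).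
by exists (pblock s.1 x); rewrite ?xP ?mem_pblock ?cov ?inE.
Qed.

Lemma below_refl s x xs : is_ppo s -> x \in xs -> x \in below s xs.
Proof.
move=> sP xxs; rewrite mem_below //; apply/hasP; exists x => //.
case: sP => /and3P[/eqP cov _ _] _ refl _ _.
by apply: refl; rewrite pblock_mem // cov inE.
Qed.

End PartiallyOrderedPartitions.

Section GraphPartition.
Variables (T : finType) (E : rel T).
Implicit Types (x y z : T) (xs : seq T).

Local Notation G := (graph_ppo E).

Lemma scc_refl x : x \in scc E x.
Proof. by rewrite inE /ancestor connect0. Qed.

Lemma scc_mem x : scc E x \in G.1.
Proof. exact: imset_f. Qed.

Lemma partition_scc : partition G.1 [set: T].
Proof.
pose R x y := ancestor E x y && ancestor E y x.
have eqR : {in [set: T] & &, equivalence_rel R}.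
  move=> x y z _ _ _; rewrite /R /ancestor connect0; split=> // /andP[xy yx].
  by apply/andP/andP=> -[h1 h2]; split; apply: connect_trans; eassumption.
rewrite -[G.1](_ : equivalence_partition R [set: T] = _); first exact: equivalence_partitionP.
by apply/setP => C; apply/imsetP/imsetP => -[x _ ->]; exists x => //; apply/setP => y; rewrite !inE.
Qed.

Lemma pblock_scc x : pblock G.1 x = scc E x.
Proof. by apply: def_pblock (scc_mem x) (scc_refl x); case/and3P: partition_scc. Qed.

Lemma scc_le x y : ((scc E x, scc E y) \in G.2) = ancestor E x y.
Proof.
rewrite inE /= !scc_mem; apply/existsP/idP => [[u /andP[xu /existsP[v /andP[yv uv]]]]|xy].
  move: xu yv; rewrite !inE => /andP[xu _] /andP[_ vy].
  exact: connect_trans (connect_trans xu uv) vy.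
by exists x; rewrite scc_refl; apply/existsP; exists y; rewrite scc_refl.
Qed.

Lemma is_ppo_graph : is_ppo G.
Proof.
have sccP C : C \in G.1 -> exists x, C = scc E x by case/imsetP=> x _ ->; exists x.
have leP C1 C2 : (C1, C2) \in G.2 ->
    exists x y, [/\ C1 = scc E x, C2 = scc E y & ancestor E x y].
  move=> CG; move: (CG); rewrite inE /= => /and3P[/sccP[x ex] /sccP[y ey] _].
  by move: CG; rewrite ex ey scc_le; exists x, y.
split; first exact: partition_scc.
- by move=> C1 C2; rewrite inE => /and3P[-> ->].
- by move=> C /sccP[x ->]; rewrite scc_le /ancestor connect0.
- move=> C1 C2 /leP[x [y [-> -> xy]]]; rewrite scc_le => yx.
  apply/setP => z; rewrite !inE.
  by apply/andP/andP => -[h1 h2]; split; apply: connect_trans; eassumption.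
- move=> C1 C2 C3 /leP[x [y [-> -> xy]]] /leP[y' [z [eyy' -> yz]]].
  rewrite scc_le; apply: connect_trans xy _.
  have : y' \in scc E y by rewrite eyy' scc_refl.
  by rewrite inE => /andP[yy' _]; apply: connect_trans yy' yz.
Qed.

Lemma mem_below_graph x xs : (x \in below G xs) = has (ancestor E x) xs.
Proof.
rewrite mem_below; last exact: is_ppo_graph.
by apply: eq_has => y; rewrite !pblock_scc scc_le.
Qed.

End GraphPartition.

Section Minimizers.
Variables (T : finType) (E : rel T).
Implicit Types (a b c d : T) (xs : seq T) (s t : ppo T).

Local Notation G := (graph_ppo E).

Definition p_adjacent_pairs : {set T * T} := [set p | p_adjacent E p.1 p.2].

Definition unshielded_conductors : {set T * T * T} :=
  [set t : T * T * T | let: (a, b, c) := t in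
     [&& a != b, b != c, a != c, p_adjacent E a b, p_adjacent E c b,
         ~~ p_adjacent E a c & ancestor E b a || ancestor E b c]].

Lemma p_adjacent_sym a b : p_adjacent E a b = p_adjacent E b a.
Proof.
rewrite /p_adjacent eq_sym orbCA; congr (_ && (_ || (_ || _))).
by apply/existsP/existsP => -[d /and3P[h1 h2 h3]]; exists d; rewrite h1 h2 orbC.
Qed.

Lemma p_adjacent_common_child a c d : a != c -> E a d -> E c d ->
  ancestor E d a || ancestor E d c -> p_adjacent E a c.
Proof.
by move=> ac ad cd dac; rewrite /p_adjacent ac; apply/or3P/Or33/existsP; exists d; rewrite ad cd.
Qed.

Lemma E1P s a b : reflect (a != b /\ d_connected E (below s [:: a; b] :\: [set a; b]) a b)
  ((a, b) \in E1 E s).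
Proof.
rewrite inE /=; apply: (iffP andP) => -[ab].
  by move/pbP/not_d_separatedP.
by move/not_d_separatedP/pbP.
Qed.

Lemma p_adjacent_pairs_sub_E1 s : p_adjacent_pairs \subset E1 E s.
Proof.
apply/subsetP => -[a b] ab; apply/E1P; move: ab; rewrite inE /= => ab.
by split; [case/andP: ab | apply: d_connected_p_adjacent].
Qed.

Lemma d_connected_below_graph xs a c : a \in xs -> c \in xs -> a != c ->
  d_connected E (below G xs :\: [set a; c]) a c ->
  [\/ E a c, E c a | exists2 d, has (ancestor E d) xs & E a d && E c d].
Proof.
move=> axs cxs ac.
have A_anc : ancestral E (below G xs).
  move=> u v; rewrite !mem_below_graph => uv /hasP[y yxs vy].
  by apply/hasP; exists y => //; apply: connect_trans uv vy.
have xsA := below_refl (is_ppo_graph E).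
case/(d_connected_ancestral A_anc (xsA _ _ axs) (xsA _ _ cxs) ac erefl) => [||[d]].
- by constructor 1.
- by constructor 2.
by rewrite mem_below_graph; constructor 3; exists d.
Qed.

Lemma E1_graph : E1 E G = p_adjacent_pairs.
Proof.
apply/eqP; rewrite eqEsubset p_adjacent_pairs_sub_E1 andbT.
apply/subsetP => -[a b] /E1P[ab dcon]; rewrite inE /= /p_adjacent ab /=.
have bxs : b \in [:: a; b] by rewrite !inE eqxx orbT.
have [->|->|[d dab /andP[ad bd]]] := d_connected_below_graph (mem_head a _) bxs ab dcon.
- by [].
- by rewrite orbT.
by apply/or3P/Or33/existsP; exists d; rewrite ad bd; rewrite /= orbF in dab.
Qed.

Lemma E2_graph : E2 E G = unshielded_conductors.
Proof.
by apply/setP => -[[a b] c]; rewrite /E2 E1_graph in_set [RHS]in_set /= !pblock_scc !scc_le !inE.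
Qed.

Lemma E3_graph_sub : E3 E G \subset unshielded_perfect_nonconductors E.
Proof.
apply/subsetP => -[[a b] c]; rewrite /E3 E1_graph !inE /=.
case/and5P=> ab bc ac pab /and3P[pcb npac /pbP/not_d_separatedP dcon].
rewrite ac npac pab pcb /=.
have cxs : c \in [:: a; b; c] by rewrite !inE eqxx !orbT.
have [eac|eca|[d dabc /andP[ad cd]]] := d_connected_below_graph (mem_head a _) cxs ac dcon.
- by move: npac; rewrite /p_adjacent ac eac.
- by move: npac; rewrite /p_adjacent ac eca orbT.
have ndac : ~~ (ancestor E d a || ancestor E d c).
  by apply: contra npac; apply: p_adjacent_common_child.
case/or4P: dabc => [da|db|dc|//]; last by rewrite dc orbT in ndac.
  by rewrite da in ndac.
apply/andP; split; last by apply/existsP; exists d; rewrite ad cd db.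
apply: contra ndac => /orP[ba|bc'].
  by apply/orP; left; apply: connect_trans db ba.
by apply/orP; right; apply: connect_trans db bc'.
Qed.

Lemma E1_of_conductor t a b c : p_adjacent E a b -> p_adjacent E b c ->
  ancestor E b a -> a != c -> b \notin below t [:: a; c] -> (a, c) \in E1 E t.
Proof.
move=> ab bc ba ac nb; apply/E1P; split=> //.
by apply: d_connected_via_ancestor ab bc ba _; rewrite !inE negb_and nb orbT.
Qed.

Lemma unshielded_conductors_sub_E2 t : is_ppo t -> E1 E t = p_adjacent_pairs ->
  unshielded_conductors \subset E2 E t.
Proof.
move=> tP E1t; apply/subsetP => -[[a b] c]; rewrite /E2 E1t !inE /=.
case/and5P=> ab bc ac pab /and3P[pcb npac bac]; rewrite ab bc ac pab pcb npac /=.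
have := mem_below b [:: a; c] tP; rewrite /= orbF => <-.
apply/negPn/negP => nb.
have nb' : b \notin below t [:: c; a] by move: nb; rewrite !mem_below //= !orbF orbC.
have pbc : p_adjacent E b c by rewrite p_adjacent_sym.
have pba : p_adjacent E b a by rewrite p_adjacent_sym.
have ca : c != a by rewrite eq_sym.
case/orP: bac => [ba|bc'].
  by have := E1_of_conductor pab pbc ba ac nb; rewrite E1t inE /= (negPf npac).
have := E1_of_conductor pcb pba bc' ca nb'.
by rewrite E1t inE /= p_adjacent_sym (negPf npac).
Qed.

Lemma upnc_sub_E3 t : is_ppo t -> E1 E t = p_adjacent_pairs ->
  unshielded_perfect_nonconductors E \subset E3 E t.
Proof.
move=> tP E1t; apply/subsetP => -[[a b] c]; rewrite /E3 E1t !inE /=.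
case/and5P=> ac npac pab pcb /andP[_ /existsP[d /and3P[ad cd db]]].
have ab : a != b by case/andP: pab.
have bc : b != c by rewrite eq_sym; case/andP: pcb.
rewrite ab bc ac pab pcb npac /=; apply/pbP/not_d_separatedP.
apply: d_connected_common_child ad cd _; apply/existsP; exists b.
rewrite db andbT !inE negb_or [b == a]eq_sym ab bc /=.
by apply: below_refl tP _; rewrite !inE eqxx orbT.
Qed.

Lemma E3_graph : E3 E G = unshielded_perfect_nonconductors E.
Proof.
apply/eqP; rewrite eqEsubset E3_graph_sub.
by rewrite upnc_sub_E3 ?E1_graph //; apply: is_ppo_graph.
Qed.

Lemma S1_graph : S1 E G.
Proof.
split=> [|t _]; first exact: is_ppo_graph.
by rewrite E1_graph subset_leq_card ?p_adjacent_pairs_sub_E1.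
Qed.

Lemma S1_E1 t : S1 E t -> E1 E t = p_adjacent_pairs.
Proof.
case=> _ /(_ _ (is_ppo_graph E)); rewrite E1_graph => le_t.
by apply/eqP; rewrite eq_sym eqEcard p_adjacent_pairs_sub_E1.
Qed.

Lemma S2_graph : S2 E G.
Proof.
split=> [|t [tP min_t]]; first exact: S1_graph.
by rewrite E2_graph subset_leq_card // unshielded_conductors_sub_E2 // S1_E1.
Qed.

Lemma S3_graph : S3 E G.
Proof.
split=> [|t [[tP min_t] _]]; first exact: S2_graph.
by rewrite E3_graph subset_leq_card // upnc_sub_E3 // S1_E1.
Qed.

Lemma S3_E3 s : S3 E s -> E3 E s = unshielded_perfect_nonconductors E.
Proof.
case=> -[[sP min_s] _] /(_ _ S2_graph); rewrite E3_graph => le_s.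
by apply/eqP; rewrite eq_sym eqEcard le_s upnc_sub_E3 // S1_E1.
Qed.

End Minimizers.

Theorem proposition3p10 (n : nat) (hn : 1 <= n) (E : rel 'I_n) :
  S3 E (graph_ppo E) /\
  (forall s : ppo 'I_n, S3 E s -> E3 E s = unshielded_perfect_nonconductors E).
Proof. by split; [apply: S3_graph | apply: S3_E3]. Qed.
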